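(* For every $n\ge0$ and every formula $\alpha$: $\vDash_{\mathcal{R}_n^0}\circ^{n+2}\alpha$.
   Context: Formulas are built from a countable set of propositional variables using unary $\neg,\circ$ and binary $\land,\lor,\to$; $\circ^0\alpha=\alpha$, $\circ^{m+1}\alpha=\circ(\circ^m\alpha)$. $\mathcal{M}_0$ is the three-valued Nmatrix with values $T,t,F$, designated set $D=\{T,t\}$ and multioperations: $\neg T=\{F\}$, $\neg t=\neg F=\{T,t\}$; $\circ T=\circ F=\{T,t\}$, $\circ t=\{F\}$; $x\land y=\{T,t\}$ if $x,y\in D$, else $\{F\}$; $x\lor y=\{T,t\}$ if $x\in D$ or $y\in D$, else $\{F\}$; $x\to y=\{T,t\}$ if $x\notin D$ or $y\in D$, else $\{F\}$. A valuation over $\mathcal{M}_0$ is a map $\vartheta$ from formulas to $\{T,t,F\}$ with $\vartheta(\alpha\#\beta)\in\vartheta(\alpha)\#\vartheta(\beta)$ and $\vartheta(\star\alpha)\in\star\vartheta(\alpha)$ for $\star\in\{\neg,\circ\}$. $\mathcal{F}_n^0$ is the set of valuations $\vartheta$ over $\mathcal{M}_0$ such that for every formula $\alpha$: if $\vartheta(\circ^n\alpha)\in\{T,F\}$ then $\vartheta(\circ^{n+1}\alpha)=T$. The restricted Nmatrix $\mathcal{R}_n^0=\langle\mathcal{M}_0,\mathcal{F}_n^0\rangle$ has consequence: $\Gamma\vDash_{\mathcal{R}_n^0}\alpha$ iff every $\vartheta\in\mathcal{F}_n^0$ with $\vartheta[\Gamma]\subseteq D$ has $\vartheta(\alpha)\in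 D$. *)

From Stdlib Require Import List.

Inductive formula : Type :=
  | Var  : nat -> formula
  | Neg  : formula -> formula
  | Circ : formula -> formula
  | And  : formula -> formula -> formula
  | Or   : formula -> formula -> formula
  | Imp  : formula -> formula -> formula.

Fixpoint circ_iter (m : nat) (a : formula) : formula :=
  match m with
  | O => a
  | S k => Circ (circ_iter k a)
  end.

Inductive val3 : Type := VT | Vt | VF.

Definition designated (x : val3) : Prop := x = VT \/ x = Vt.

(* Multioperations of M_0, as membership predicates: op_x y means y ∈ op x. *)
Definition neg_m (x y : val3) : Prop :=
  match x with
  | VT => y = VF
  | Vt | VF => designated y
  end.

Definition circ_m (x y : val3) : Prop :=
  match x with
  | VT | VF => designated y
  | Vt => y = VF
  end.

Definition and_m (x y z : val3) : Prop :=
  (designated x /\ designated y -> designated z) /\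
  (~ (designated x /\ designated y) -> z = VF).

Definition or_m (x y z : val3) : Prop :=
  (designated x \/ designated y -> designated z) /\
  (~ (designated x \/ designated y) -> z = VF).

Definition imp_m (x y z : val3) : Prop :=
  (~ designated x \/ designated y -> designated z) /\
  (~ (~ designated x \/ designated y) -> z = VF).

Definition valuation (v : formula -> val3) : Prop :=
  forall a b : formula,
    neg_m (v a) (v (Neg a)) /\
    circ_m (v a) (v (Circ a)) /\
    and_m (v a) (v b) (v (And a b)) /\
    or_m (v a) (v b) (v (Or a b)) /\
    imp_m (v a) (v b) (v (Imp a b)).

Definition in_F0 (n : nat) (v : formula -> val3) : Prop :=
  valuation v /\
  forall a : formula,
    (v (circ_iter n a) = VT \/ v (circ_iter n a) = VF) ->
    v (circ_iter (S n) a) = VT.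

Definition conseq_R0 (n : nat) (Gamma : formula -> Prop) (a : formula) : Prop :=
  forall v : formula -> val3,
    in_F0 n v ->
    (forall g, Gamma g -> designated (v g)) ->
    designated (v a).

Definition empty_set (g : formula) : Prop := False.

(* The restriction of F_n^0 forces v(∘^(n+1) α) ≠ t: it is T when
   v(∘^n α) ∈ {T, F}, and F when v(∘^n α) = t because ∘t = {F}.
   Applying ∘ to any value other than t yields a designated value. *)

From Stdlib Require Import PeanoNat.

Lemma circ_m_designated (x y : val3) : x <> Vt -> circ_m x y -> designated y.
Proof. destruct x; simpl; tauto. Qed.

Lemma valuation_circ (v : formula -> val3) (a : formula) :
  valuation v -> circ_m (v a) (v (Circ a)).
Proof. intros Hv. apply (Hv a a). Qed.

Lemma in_F0_circ_iter_S_neq_t (n : nat) (v : formula -> val3) (a : formula) :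
  in_F0 n v -> v (circ_iter (S n) a) <> Vt.
Proof.
  intros [Hv Hrestr].
  pose proof (valuation_circ v (circ_iter n a) Hv) as Hcirc.
  destruct (v (circ_iter n a)) eqn:E.
  - rewrite Hrestr by auto. discriminate.
  - simpl in Hcirc |- *. rewrite Hcirc. discriminate.
  - rewrite Hrestr by auto. discriminate.
Qed.

Theorem theorem22 : forall (n : nat) (a : formula),
  conseq_R0 n empty_set (circ_iter (n + 2) a).
Proof.
  intros n a v Hv _.
  rewrite Nat.add_comm; simpl.
  apply (circ_m_designated (v (circ_iter (S n) a))).
  - exact (in_F0_circ_iter_S_neq_t n v a Hv).
  - exact (valuation_circ v _ (proj1 Hv)).
Qed.
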